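(* For any tree $T$, the matrix $\mathrm{Min4PC}_T=(m_{a,b})_{a,b\in\mathcal{V}_2}$ is hypermetric, is of negative type, and has exactly one positive eigenvalue.
   Context: For a tree $T$ with vertex set $V$ on $n$ vertices, $d_{i,j}$ is the distance between $i,j$ and $\mathcal{V}_2$ the set of 2-element subsets of $V$. $\mathrm{Min4PC}_T$ is the $\binom n2\times\binom n2$ matrix indexed by $\mathcal{V}_2$ whose entry in row $\{i,j\}$, column $\{k,l\}$ is $\min\{d_{i,l}+d_{j,k},\ d_{i,k}+d_{j,l},\ d_{i,j}+d_{k,l}\}$. A symmetric matrix $D=(d_{a,b})$ indexed by a finite set $X$ (with zero diagonal) is hypermetric if $\sum_{\{a,b\}\subseteq X, a\ne b} x_ax_bd_{a,b}\le 0$ for all integer vectors $x\in\mathbb{Z}^X$ with $\sum_a x_a=1$, and of negative type if the same inequality holds for all $x\in\mathbb{Z}^X$ with $\sum_a x_a=0$. *)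

From mathcomp Require Import all_boot all_order all_algebra.
Set Implicit Arguments. Unset Strict Implicit. Unset Printing Implicit Defensive.
Import Order.TTheory GRing.Theory Num.Theory.

Definition is_tree (V : finType) (e : rel V) : Prop :=
  [/\ symmetric e, irreflexive e, (forall x y : V, connect e x y) &
      (forall p : seq V, 3 <= size p -> uniq p -> ~~ cycle e p)].

Definition walkb (V : finType) (e : rel V) (k : nat) (x y : V) : bool :=
  [exists p : k.-tuple V, path e x p && (last x p == y)].

Definition dist (V : finType) (e : rel V) (x y : V) : nat :=
  find (fun k => walkb e k x y) (iota 0 #|V|).

Definition V2 (V : finType) : {set {set V}} := [set S : {set V} | #|S| == 2].

Definition min4pc_entry (V : finType) (e : rel V) (S T : {set V}) : nat :=
  match enum S, enum T with
  | [:: i; j], [:: k; l] =>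
      minn (minn (dist e i l + dist e j k) (dist e i k + dist e j l))
           (dist e i j + dist e k l)
  | _, _ => 0
  end.

Definition Min4PC (R : nzRingType) (V : finType) (e : rel V)
  : 'M[R]_#|V2 V| :=
  \matrix_(a, b) ((min4pc_entry e (enum_val a) (enum_val b))%:R)%R.

Local Open Scope ring_scope.

Definition hypermetric (R : numDomainType) (N : nat) (D : 'M[R]_N) : Prop :=
  forall x : 'I_N -> int, \sum_(a < N) x a = 1 ->
    \sum_(a < N) \sum_(b < N | (a < b)%N) ((x a * x b)%:~R * D a b) <= 0.

Definition negative_type (R : numDomainType) (N : nat) (D : 'M[R]_N) : Prop :=
  forall x : 'I_N -> int, \sum_(a < N) x a = 0 ->
    \sum_(a < N) \sum_(b < N | (a < b)%N) ((x a * x b)%:~R * D a b) <= 0.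

(* exactly one positive eigenvalue, counted with multiplicity: the
   characteristic polynomial splits as prod (X - l) over the list s of
   eigenvalues (with multiplicity) and exactly one of them is positive *)
Definition one_positive_eigenvalue (R : rcfType) (N : nat) (A : 'M[R]_N) : Prop :=
  exists s : seq R, char_poly A = \prod_(l <- s) ('X - l%:P)
                    /\ count (fun l => 0 < l) s = 1%N.

(* In a tree every edge cuts the vertex set in two, and 2 d(x,y) is the number
   of oriented edges whose removal separates x from y.  Among the three
   matchings of four vertices i, j, k, l, a minimal one has no edge separating
   both of its pairs; hence the Min4PC entry of {i,j},{k,l} is half the Hamming
   distance between the sets of edges separating i from j and k from l.  A
   halved Hamming matrix M satisfies x^T M x = sum_z s_z (sum x - s_z), where
   s_z is the weight x puts on one side of the coordinate z; this is <= 0 for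
   integer x summing to 0 or 1, which gives hypermetricity and negative type.
   Finally, a symmetric matrix whose form is <= 0 on the hyperplane sum x = 0
   but somewhere positive has exactly one positive eigenvalue, by the spectral
   theorem applied to its complexification. *)

From mathcomp Require Import all_boot all_order all_algebra.
From mathcomp Require Import zify ring sesquilinear spectral complex.
Set Implicit Arguments. Unset Strict Implicit. Unset Printing Implicit Defensive.
Import Order.TTheory GRing.Theory Num.Theory.

Lemma xorb_nat (b c : bool) : (b (+) c : nat) + 2 * (b && c) = b + c.
Proof. by case: b; case: c. Qed.

Lemma sum_xorb_nat (I : finType) (P Q : pred I) :
  \sum_i (P i (+) Q i : nat) + 2 * \sum_i (P i && Q i : nat) =
  \sum_i (P i : nat) + \sum_i (Q i : nat).
Proof. by rewrite big_distrr -!big_split; apply: eq_bigr => i _; apply: xorb_nat. Qed.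

Lemma card2_enum (T : finType) (S : {set T}) : #|S| = 2 -> exists i j, enum S = [:: i; j].
Proof. by rewrite cardE; case: (enum S) => [|i [|j [|k s]]] // _; exists i, j. Qed.

Section TreeDistance.
Variables (V : finType) (e : rel V).
Hypothesis e_sym : symmetric e.
Hypothesis e_irr : irreflexive e.
Hypothesis e_connected : forall x y : V, connect e x y.
Hypothesis e_acyclic : forall p : seq V, 3 <= size p -> uniq p -> ~~ cycle e p.

Local Notation d := (dist e).

Lemma walkbP k x y :
  reflect (exists p : seq V, [/\ size p = k, path e x p & last x p = y])
          (walkb e k x y).
Proof.
apply: (iffP existsP) => [[p /andP[ep /eqP <-]]|[p [<- ep <-]]].
  by exists (tval p); rewrite size_tuple.
by exists (in_tuple p); rewrite ep eqxx.
Qed.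

Lemma has_short_walk x y : has (fun k => walkb e k x y) (iota 0 #|V|).
Proof.
have /connectP[p ep ->] := e_connected x y.
case/shortenP: ep => q eq uq _.
apply/hasP; exists (size q); last by apply/walkbP; exists q.
by rewrite mem_iota /= -ltnS -[(size q).+1]/(size (x :: q)) -(card_uniqP uq) ltnS max_card.
Qed.

Lemma dist_lt_card x y : d x y < #|V|.
Proof. by have := has_short_walk x y; rewrite has_find size_iota. Qed.

Definition geodesic (x : V) (p : seq V) : Prop := path e x p /\ size p = d x (last x p).

Lemma geodesic_exists x y : exists2 p, geodesic x p & last x p = y.
Proof.
have := nth_find 0 (has_short_walk x y).
rewrite nth_iota ?add0n ?dist_lt_card // => /walkbP[p [sp ep lp]].
by exists p; rewrite /geodesic ?lp.
Qed.

Lemma dist_path_le x p : path e x p -> d x (last x p) <= size p.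
Proof.
move=> ep; have [lt_p|] := ltnP (size p) #|V|; last exact/leq_trans/ltnW/dist_lt_card.
rewrite leqNgt; apply/negP => /(before_find 0).
by rewrite nth_iota // add0n => /negbT/negP[]; apply/walkbP; exists p.
Qed.

Lemma dist_xx x : d x x = 0.
Proof. by apply/eqP; rewrite -leqn0 (@dist_path_le x [::]). Qed.

Lemma dist_eq0 x y : d x y = 0 -> x = y.
Proof. by have [[|z p] [_ sp] <-] := geodesic_exists x y; rewrite -sp. Qed.

Lemma dist_gt0 x y : x != y -> 0 < d x y.
Proof. by rewrite lt0n; apply: contra => /eqP/dist_eq0->. Qed.

Lemma dist_triangle x y z : d x z <= d x y + d y z.
Proof.
have [p [ep sp] <-] := geodesic_exists x y.
have [q [eq sq] <-] := geodesic_exists (last x p) z.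
by rewrite -sp -sq -size_cat -last_cat dist_path_le // cat_path ep.
Qed.

Lemma dist_sym x y : d x y = d y x.
Proof.
wlog suff: x y / d y x <= d x y by move=> le; apply/eqP; rewrite eqn_leq !le.
have [p [ep sp] <-] := geodesic_exists x y.
have rev_ep : path e (last x p) (rev (belast x p)).
  by rewrite rev_path (eq_path (e' := e)) // => a b; rewrite /= e_sym.
have := dist_path_le rev_ep; rewrite size_rev size_belast -sp.
by case: p {ep sp rev_ep} => //= z p; rewrite rev_cons last_rcons.
Qed.

Lemma dist_edge x y : e x y -> d x y = 1.
Proof.
move=> xy; apply/eqP; rewrite eqn_leq (@dist_path_le x [:: y]) /= ?xy //.
by rewrite dist_gt0 //; apply: contraTneq xy => ->; rewrite e_irr.
Qed.

Lemma dist_step n x y : d x y = n.+1 -> exists2 x', e x x' & d x' y = n.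
Proof.
have [[|z p] [ep sp] <-] := geodesic_exists x y; rewrite -sp // => -[sn].
case/andP: ep => xz ep; exists z => //; apply/eqP.
rewrite eqn_leq -sn dist_path_le //=.
by have := dist_triangle x z (last z p); rewrite -sp dist_edge.
Qed.

Lemma geodesic_between x p w : geodesic x p -> w \in x :: p ->
  d x w + d w (last x p) = d x (last x p).
Proof.
move=> [ep sp]; rewrite in_cons => /predU1P[->|w_in]; first by rewrite dist_xx.
move: ep sp; case/splitPr: w_in => p1 p2.
rewrite cat_path last_cat size_cat /= => /and3P[ep1 p1w ep2] sp.
apply/eqP; rewrite eqn_leq dist_triangle andbT -sp -addSnnS leq_add ?dist_path_le //.
by rewrite -(size_rcons p1 w) -[w in d x w](last_rcons x p1) dist_path_le // rcons_path ep1.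
Qed.

Lemma geodesic_side x p w z : geodesic x p -> w \in x :: p ->
  d x z + d w (last x p) <= d x (last x p) + d w z.
Proof. by move=> gp /(geodesic_between gp) <-; have := dist_triangle x w z; lia. Qed.

Lemma geodesic_behead x z p : geodesic x (z :: p) -> geodesic z p.
Proof.
case=> /= /andP[xz ep] sp; split=> //; apply/eqP; rewrite eqn_leq dist_path_le //=.
have := dist_triangle x z (last z p); have := @dist_path_le x [:: z]; rewrite /= xz.
lia.
Qed.

Lemma geodesic_uniq x p : geodesic x p -> uniq (x :: p).
Proof.
elim: p x => [//|z p IH] x gp; rewrite cons_uniq IH ?andbT; last exact: geodesic_behead gp.
case: gp => ep sp; apply/negP => x_in; move: ep sp {IH}; case/splitPr: x_in => p1 p2.
rewrite cat_path last_cat size_cat /= => /and3P[_ _ /dist_path_le]; lia.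
Qed.

(* Acyclicity is used only here: a second edge [ab] joining the two sides of
   [uv] would close a cycle through geodesics from [a] to [u] and [b] to [v]. *)
Lemma edge_cut_unique u v a b : e u v -> e a b ->
  d a u < d a v -> d b v <= d b u -> a = u /\ b = v.
Proof.
move=> uv ab au bv.
have [p gp lp] := geodesic_exists a u.
have [q gq lq] := geodesic_exists b v.
have near_u w : w \in a :: p -> d w u < d w v.
  by move/(geodesic_side v gp); rewrite lp; lia.
have near_v w : w \in b :: q -> d w v <= d w u.
  by move/(geodesic_side u gq); rewrite lq; lia.
have [/andP[/nilP p0 /nilP q0]|pq] := boolP (nilp p && nilp q).
  by move: lp lq; rewrite p0 q0 /= => -> ->.
have size_c : 3 <= size (rev (a :: p) ++ b :: q).
  by move: pq; rewrite size_cat size_rev /= /nilp; lia.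
have uniq_c : uniq (rev (a :: p) ++ b :: q).
  rewrite cat_uniq rev_uniq !geodesic_uniq // andbT; apply/hasPn => w /near_v wv.
  by rewrite mem_rev; apply: contraL wv => /near_u; rewrite -ltnNge.
case/negP: (e_acyclic size_c uniq_c).
rewrite (cycle_path a) last_cat /= lq cat_path /= (lastI a p) rev_rcons /= lp.
have rev_ep : path e u (rev (belast a p)).
  by rewrite -lp rev_path (eq_path (e' := e)) ?gp.1 // => x y; rewrite /= e_sym.
have -> : last u (rev (belast a p)) = a.
  by case: (p) lp => [/= ->|z r _] //=; rewrite rev_cons last_rcons.
by rewrite rev_ep e_sym uv ab gq.1.
Qed.

Lemma dist_across_edge u v x y : e u v -> d x u < d x v -> d y v <= d y u ->
  d x y = d x u + 1 + d v y.
Proof.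
move=> uv; move Hn: (d x y) => n; elim: n x Hn => [|n IH] x dxy xu yv.
  by move/dist_eq0: dxy xu => ->; rewrite ltnNge yv.
have [x' xx' dx'y] := dist_step dxy.
have [x'u|vx'] := ltnP (d x' u) (d x' v); last first.
  by case: (edge_cut_unique uv xx' xu vx') => xu' x'v; subst; rewrite dist_xx; lia.
have := IH x' dx'y x'u yv; have := dist_triangle x x' u; have := dist_triangle x u y.
have := dist_triangle u v y; rewrite (dist_edge xx') (dist_edge uv) (dist_sym u y) (dist_sym v y).
lia.
Qed.

Lemma dist_four_across_edge u v x y z w : e u v ->
  d x u < d x v -> d y v <= d y u -> d z u < d z v -> d w v <= d w u ->
  d x z + d y w + 2 <= d x y + d z w.
Proof.
move=> uv xu yv zu wv; rewrite (dist_across_edge uv xu yv) (dist_across_edge uv zu wv).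
have := dist_triangle x u z; have := dist_triangle y v w.
rewrite (dist_sym u z) (dist_sym y v); lia.
Qed.

(* In a tree, [d x z.1 < d x z.2] says that [x] lies in the component of [z.1]
   once the edge [z] is removed. *)
Definition on_tail_side (x : V) (z : V * V) : bool := e z.1 z.2 && (d x z.1 < d x z.2).

Definition separates (x y : V) (z : V * V) : bool := on_tail_side x z (+) on_tail_side y z.

Lemma separates_edge x x' z : e x x' ->
  separates x x' z = (z == (x, x')) || (z == (x', x)).
Proof.
move=> xx'; have x'x : e x' x by rewrite e_sym.
have dxx' := dist_edge xx'; have dx'x := dist_edge x'x.
case: z => u v; rewrite /separates /on_tail_side /= !xpair_eqE.
case uv: (e u v) => /=; last first.
  by apply/esym/norP; split; apply: contraFN uv => /andP[/eqP-> /eqP->]; rewrite // e_sym.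
have [xu|vx] := ltnP (d x u) (d x v); have [x'u|vx'] := ltnP (d x' u) (d x' v) => /=.
- by apply/esym/norP; split; apply/negP => /andP[/eqP eu /eqP ev];
    move: xu x'u; rewrite eu ev !dist_xx; lia.
- by have [-> ->] := edge_cut_unique uv xx' xu vx'; rewrite !eqxx.
- by have [-> ->] := edge_cut_unique uv x'x x'u vx; rewrite !eqxx orbT.
- by apply/esym/norP; split; apply/negP => /andP[/eqP eu /eqP ev];
    move: vx vx'; rewrite eu ev !dist_xx; lia.
Qed.

Lemma count_separates_edge x x' : e x x' -> \sum_z (separates x x' z : nat) = 2.
Proof.
move=> xx'; have ne : (x, x') != (x', x) by apply: contraTneq xx' => -[->]; rewrite e_irr.
rewrite (bigD1 (x, x')) // (bigD1 (x', x)) 1?eq_sym //= big1 => [|t /andP[tx' tx]].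
  by rewrite !separates_edge // !eqxx orbT.
by rewrite separates_edge // (negbTE tx) (negbTE tx').
Qed.

Lemma dist_count_separates x y : 2 * d x y = \sum_z (separates x y z : nat).
Proof.
move Hn: (d x y) => n; elim: n x Hn => [|n IH] x dxy.
  by rewrite (dist_eq0 dxy) big1 // => z _; rewrite /separates addbb.
have [x' xx' dx'y] := dist_step dxy.
have x'x : e x' x by rewrite e_sym.
have dyx : d y x = n.+1 by rewrite dist_sym.
have dyx' : d y x' = n by rewrite dist_sym.
have disjoint z : separates x x' z -> separates x' y z = false.
  rewrite separates_edge // => /orP[]/eqP->;
  rewrite /separates /on_tail_side /= ?xx' ?x'x dist_xx (dist_edge x'x) dyx dyx' /=.
    by rewrite ltnNge leqnSn.
  by rewrite ltnSn.
have split_sep z : (separates x y z : nat) = separates x x' z + separates x' y z.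
  rewrite -xorb_nat (_ : _ && _ = false) ?muln0 ?addn0; last by apply/andP => -[/disjoint->].
  rewrite /separates.
  by case: (on_tail_side x z); case: (on_tail_side x' z); case: (on_tail_side y z).
by rewrite (eq_bigr _ (fun z _ => split_sep z)) big_split /= count_separates_edge // -IH // mulnS.
Qed.

Lemma separates_both_lt p q r s z : separates p q z -> separates r s z ->
  minn (d p r + d q s) (d p s + d q r) + 2 <= d p q + d r s.
Proof.
case: z => u v; rewrite /separates /on_tail_side /=; case uv: (e u v) => //=.
have [pu|vp] := ltnP (d p u) (d p v); have [qu|vq] := ltnP (d q u) (d q v) => //= _;
have [ru|vr] := ltnP (d r u) (d r v); have [su|vs] := ltnP (d s u) (d s v) => //= _.
- by have := dist_four_across_edge uv pu vq ru vs; lia.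
- by have := dist_four_across_edge uv pu vq su vr; rewrite (dist_sym s r); lia.
- by have := dist_four_across_edge uv qu vp ru vs; rewrite (dist_sym q p); lia.
- by have := dist_four_across_edge uv qu vp su vr; rewrite (dist_sym q p) (dist_sym s r); lia.
Qed.

(* The witness [o] counts the oriented edges separating both pairs. *)
Lemma matching_excess p q r s : exists2 o,
    2 * (d p q + d r s) = \sum_z (separates p q z (+) separates r s z : nat) + 2 * o &
    o = 0 \/ minn (d p r + d q s) (d p s + d q r) + 2 <= d p q + d r s.
Proof.
exists (\sum_z (separates p q z && separates r s z : nat)).
  by rewrite sum_xorb_nat mulnDr !dist_count_separates.
have [z /andP[pq rs]|none] := pickP (fun z => separates p q z && separates r s z).
  by right; apply: separates_both_lt pq rs.
by left; apply: big1 => z _; rewrite none.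
Qed.

Lemma min4_count_separates i j k l :
  2 * minn (minn (d i l + d j k) (d i k + d j l)) (d i j + d k l) =
  \sum_z (separates i j z (+) separates k l z : nat).
Proof.
have [o1 E1 O1] := matching_excess i l j k.
have [o2 E2 O2] := matching_excess i k j l.
have [o3 E3 O3] := matching_excess i j k l.
have ilk z : separates i l z (+) separates j k z = separates i j z (+) separates k l z.
  by rewrite /separates addbACA [on_tail_side l z (+) _]addbC.
have ikl z : separates i k z (+) separates j l z = separates i j z (+) separates k l z.
  by rewrite /separates addbACA.
rewrite (eq_bigr _ (fun z _ => congr1 nat_of_bool (ilk z))) in E1.
rewrite (eq_bigr _ (fun z _ => congr1 nat_of_bool (ikl z))) in E2.
set S := \sum_z _ in E1 E2 E3 *.
move: O1 O2; rewrite (dist_sym l k) (dist_sym l j) (dist_sym k j); lia.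
Qed.

Definition splits (S : {set V}) (z : V * V) : bool :=
  if enum S is [:: i; j] then separates i j z else false.

Lemma min4pc_entry_count (S T : {set V}) : #|S| = 2 -> #|T| = 2 ->
  2 * min4pc_entry e S T = \sum_z (splits S z (+) splits T z : nat).
Proof.
move=> /card2_enum[i [j enumS]] /card2_enum[k [l enumT]].
by rewrite /min4pc_entry /splits enumS enumT min4_count_separates.
Qed.

Lemma splits_set2 i j : i != j -> splits [set i; j] =1 separates i j.
Proof.
move=> ij z; have /card2_enum[a [b enum_ij]] : #|[set i; j]| = 2 by rewrite cards2 ij.
have /andP[ab _] : uniq [:: a; b] by rewrite -enum_ij enum_uniq.
have mem_ij w : w \in [:: a; b] -> (w == i) || (w == j).
  by rewrite -enum_ij mem_enum !inE.
rewrite /splits enum_ij; move: (mem_ij a) (mem_ij b) ab; rewrite !inE !eqxx orbT.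
by move=> /(_ isT)/pred2P[]-> /(_ isT)/pred2P[]->; rewrite ?eqxx // /separates addbC.
Qed.

Lemma min4pc_entry_gt0 : 3 <= #|V| ->
  exists a b : 'I_#|V2 V|, 0 < min4pc_entry e (enum_val a) (enum_val b).
Proof.
move=> V3; have : 3 <= size (enum V) by rewrite -cardE.
case: (enum V) (enum_uniq V) => [|i [|j [|k s]]] //=.
rewrite !inE !negb_or => /andP[/and3P[ij ik _] /andP[/andP[jk _] _]] _.
have V2ij : [set i; j] \in V2 V by rewrite inE cards2 ij.
have V2ik : [set i; k] \in V2 V by rewrite inE cards2 ik.
exists (enum_rank_in V2ij [set i; j]), (enum_rank_in V2ik [set i; k]).
rewrite !enum_rankK_in // -(ltn_pmul2l (isT : 0 < 2)) muln0.
rewrite min4pc_entry_count ?cards2 ?ij ?ik //.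
rewrite (eq_bigr (fun z => separates j k z : nat)) => [|z _]; last first.
  by rewrite !splits_set2 // /separates addbACA addbb.
by rewrite -dist_count_separates muln_gt0 dist_gt0.
Qed.

End TreeDistance.

Local Open Scope ring_scope.
Local Open Scope sesquilinear_scope.

Lemma char_poly_similar (K : comNzRingType) n (Q A P : 'M[K]_n) :
  Q *m P = 1%:M -> char_poly (Q *m A *m P) = char_poly A.
Proof.
rewrite /char_poly /char_poly_mx => QP.
have -> : 'X%:M - map_mx polyC (Q *m A *m P) =
    map_mx polyC Q *m ('X%:M - map_mx polyC A) *m map_mx polyC P.
  rewrite mulmxBr mulmxBl !map_mxM; congr (_ - _).
  by rewrite -mulmxA -scalar_mxC mulmxA -map_mxM QP map_mx1 mul1mx.
by rewrite !det_mulmx mulrAC -det_mulmx -map_mxM QP map_mx1 det1 mul1r.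
Qed.

Lemma char_poly_diag (K : comNzRingType) n (d : 'rV[K]_n) :
  char_poly (diag_mx d) = \prod_(i < n) ('X - (d 0 i)%:P).
Proof.
rewrite char_poly_trig ?diag_mx_is_trig //.
by apply: eq_bigr => i _; rewrite mxE eqxx mulr1n.
Qed.

Lemma form_mxE (C : numClosedFieldType) n (B : 'M[C]_n) (y : 'rV[C]_n) :
  (y *m B *m y^t*) 0 0 = \sum_a \sum_b y 0 a * (y 0 b)^* * B a b.
Proof.
rewrite mxE exchange_big /=; apply: eq_bigr => b _; rewrite !mxE mulr_suml.
by apply: eq_bigr => a _; rewrite mulrAC.
Qed.

Section HermitianOnePositive.
Variables (C : numClosedFieldType) (N : nat) (B : 'M[C]_N).
Hypothesis B_herm : B \is hermsymmx.

Local Notation P := (spectralmx B).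
Local Notation D := (spectral_diag B).

Lemma hermitian_spectral_decomposition : B = P^t* *m diag_mx D *m P.
Proof.
have /orthomx_spectralP {1}-> := hermitian_normalmx B_herm.
by rewrite invmx_unitary ?spectral_unitarymx.
Qed.

Lemma spectral_diag_real i : D 0 i \is Num.real.
Proof. by have /mxOverP := hermitian_spectral_diag_real B_herm; apply. Qed.

Lemma char_poly_hermitian : char_poly B = \prod_(i < N) ('X - (D 0 i)%:P).
Proof.
rewrite {1}hermitian_spectral_decomposition char_poly_similar ?char_poly_diag //.
by rewrite -[P^t*]mul1mx mulmxKtV ?spectral_unitarymx.
Qed.

Lemma spectral_form (r : 'rV[C]_N) :
  ((r *m P) *m B *m (r *m P)^t*) 0 0 = \sum_i r 0 i * D 0 i * (r 0 i)^*.
Proof.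
have PPt : P *m P^t* = 1%:M by apply/unitarymxP/spectral_unitarymx.
rewrite {2}hermitian_spectral_decomposition trmx_mul map_mxM !mulmxA -(mulmxA r P) PPt mulmx1.
rewrite -(mulmxA (r *m diag_mx D)) PPt mulmx1 mul_mx_diag mxE.
by apply: eq_bigr => i _; rewrite !mxE.
Qed.

Lemma spectral_diag_pos_exists :
  (exists y : 'rV[C]_N, 0 < (y *m B *m y^t*) 0 0) -> exists i, 0 < D 0 i.
Proof.
case=> y; have -> : y = (y *m P^t*) *m P by rewrite mulmxKtV ?spectral_unitarymx.
rewrite spectral_form => form_gt0.
apply/existsP; apply: contraTT form_gt0 => /existsPn D_le0.
apply/negbT/le_gtF/sumr_le0 => i _; rewrite mulrAC mulr_ge0_le0 ?mul_conjC_ge0 //.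
by rewrite real_leNgt ?real0 ?spectral_diag_real ?D_le0.
Qed.

Hypothesis form_le0 : forall y : 'rV[C]_N, \sum_a y 0 a = 0 -> (y *m B *m y^t*) 0 0 <= 0.

(* Two positive eigenvalues would span a plane meeting the hyperplane of
   zero-sum vectors in a vector of positive form. *)
Lemma spectral_diag_pos_uniq i j : 0 < D 0 i -> 0 < D 0 j -> i = j.
Proof.
move=> Di_gt0 Dj_gt0; apply/eqP; apply/negPn/negP => ij.
pose mass k := \sum_a P k a.
pose r (a b : C) := \row_k (if k == i then a else if k == j then b else 0).
have sum_ij (G : C -> 'I_N -> C) a b : (forall k, G 0 k = 0) ->
    \sum_k G (if k == i then a else if k == j then b else 0) k = G a i + G b j.
  move=> G0; rewrite (bigD1 i) // (bigD1 j) 1?eq_sym //= eqxx eq_sym (negbTE ij) eqxx.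
  by rewrite big1 ?addr0 // => k /andP[/negbTE-> /negbTE->].
have form_r a b : a * mass i + b * mass j = 0 -> a * D 0 i * a^* + b * D 0 j * b^* <= 0.
  move=> mass0; have sum0 : \sum_k (r a b *m P) 0 k = 0.
    under eq_bigr do rewrite mxE; rewrite exchange_big /=.
    under eq_bigr do rewrite mxE -mulr_sumr.
    by rewrite (sum_ij (fun x k => x * mass k)) // => k; rewrite mul0r.
  have := form_le0 sum0; rewrite spectral_form; under eq_bigr do rewrite mxE.
  by rewrite (sum_ij (fun x k => x * D 0 k * x^*)) // => k; rewrite !mul0r.
have pos_term x d : 0 < d -> 0 <= x * d * x^*.
  by move=> d_gt0; rewrite mulrAC mulr_ge0 ?mul_conjC_ge0 ?ltW.
have [mass_i0|mass_i_neq0] := eqVneq (mass i) 0.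
  have := form_r 1 0; rewrite mass_i0 mulr0 mul0r addr0 => /(_ erefl).
  by rewrite !mul0r addr0 conjC1 mulr1 mul1r => /le_gtF; rewrite Di_gt0.
have := form_r (mass j) (- mass i); rewrite mulNr mulrC subrr => /(_ erefl) /le_gtF.
by rewrite ltr_wpDl ?pos_term // mulrAC mulr_gt0 // mul_conjC_gt0 oppr_eq0.
Qed.

End HermitianOnePositive.

Lemma one_positive_eigenvalue_complexified (R : rcfType) N (A : 'M[R]_N) :
  A^T = A ->
  (forall y : 'rV[R[i]]_N,
     \sum_a y 0 a = 0 -> (y *m map_mx (real_complex R) A *m y^t*) 0 0 <= 0) ->
  (exists y : 'rV[R[i]]_N, 0 < (y *m map_mx (real_complex R) A *m y^t*) 0 0) ->
  one_positive_eigenvalue A.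
Proof.
move=> A_sym form_le0 form_gt0; set B := map_mx (real_complex R) A.
have B_herm : B \is hermsymmx.
  apply/is_hermitianmxP; rewrite expr0 scale1r; apply/matrixP => a b.
  rewrite !mxE conj_Creal; last by apply/complex_realP; exists (A b a).
  by rewrite -{1}A_sym mxE.
pose D := spectral_diag B.
have D_Re k : real_complex R (complex.Re (D 0 k)) = D 0 k by rewrite RRe_real ?spectral_diag_real.
exists [seq complex.Re (D 0 k) | k <- enum 'I_N]; split.
  apply: (map_poly_inj (real_complex R)).
  rewrite map_char_poly char_poly_hermitian // rmorph_prod big_map big_enum /=.
  by apply: eq_bigr => k _; rewrite map_polyXsubC; congr (_ - _%:P); exact/esym/D_Re.
have [k Dk_gt0] := spectral_diag_pos_exists B_herm form_gt0.
rewrite count_map (eq_count (a2 := pred1 k)) ?count_uniq_mem ?enum_uniq ?mem_enum //.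
move=> l /=; rewrite -ltcR rmorph0 D_Re; apply/idP/eqP => [Dl_gt0|->//].
exact: spectral_diag_pos_uniq B_herm form_le0 _ _ Dl_gt0 Dk_gt0.
Qed.

Lemma sum_sym_upper (M : nmodType) n (f : 'I_n -> 'I_n -> M) :
  (forall a b : 'I_n, f a b = f b a) -> (forall a : 'I_n, f a a = 0) ->
  \sum_a \sum_b f a b = (\sum_(a < n) \sum_(b < n | (a < b)%N) f a b) *+ 2.
Proof.
move=> fC f0; have split_ab a b :
    f a b = (if (a < b)%N then f a b else 0) + (if (b < a)%N then f b a else 0).
  by case: ltngtP => [_|_|/val_inj->]; rewrite ?addr0 ?add0r // fC.
under eq_bigr do under eq_bigr do rewrite split_ab.
rewrite mulr2n; under eq_bigr do rewrite big_split /=.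
by rewrite big_split /= [X in _ + X]exchange_big /= -!(eq_bigr _ (fun _ _ => big_mkcond _ _)).
Qed.

Section HalvedHamming.
Variables (N : nat) (E : finType) (c : 'I_N -> E -> bool) (m : 'I_N -> 'I_N -> nat).
Hypothesis m_hamming : forall a b, (2 * m a b = \sum_z (c a z (+) c b z : nat))%N.

Lemma halved_hamming_sym a b : m a b = m b a.
Proof.
have : (2 * m a b = 2 * m b a)%N by rewrite !m_hamming; apply: eq_bigr => z _; rewrite addbC.
by move/eqP; rewrite eqn_pmul2l // => /eqP.
Qed.

Lemma halved_hamming_diag a : m a a = 0%N.
Proof.
by apply/eqP; rewrite -(eqn_pmul2l (isT : (0 < 2)%N)) m_hamming big1 // => z _; rewrite addbb.
Qed.

Definition side_mass (K : nzSemiRingType) (w : 'I_N -> K) (z : E) : K :=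
  \sum_a w a * (c a z)%:R.

Lemma halved_hamming_form (K : comNzRingType) (w v : 'I_N -> K) :
  (\sum_a \sum_b w a * v b * (m a b)%:R) *+ 2 =
  \sum_z (side_mass w z * \sum_b v b + (\sum_a w a) * side_mass v z
          - side_mass w z * side_mass v z *+ 2).
Proof.
have entry a b : (m a b)%:R *+ 2 =
    \sum_z ((c a z)%:R + (c b z)%:R - (c a z)%:R * (c b z)%:R *+ 2) :> K.
  rewrite -mulr_natr -natrM mulnC m_hamming natr_sum; apply: eq_bigr => z _.
  by case: (c a z); case: (c b z);
    rewrite /= ?mul0r ?mulr0 ?mul1r ?addr0 ?add0r ?mul0rn ?subr0 ?oppr0 // mulr2n subrr.
rewrite -sumrMnl; under eq_bigr do rewrite -sumrMnl.
under eq_bigr do under eq_bigr do rewrite -mulrnAr entry mulr_sumr.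
under eq_bigr do rewrite exchange_big /=.
rewrite exchange_big /=; apply: eq_bigr => z _.
rewrite /side_mass !mulr_suml -sumrMnl -big_split -sumrB /=; apply: eq_bigr => a _.
rewrite !mulr_sumr -sumrMnl -big_split -sumrB /=; apply: eq_bigr => b _.
ring.
Qed.

Lemma halved_hamming_form_int_le0 (x : 'I_N -> int) : 0 <= \sum_a x a <= 1 ->
  \sum_a \sum_b x a * x b * (m a b)%:R <= 0.
Proof.
move=> /andP[x_ge0 x_le1]; rewrite -(pmulrn_lle0 _ (ltn0Sn 1)) halved_hamming_form.
apply: sumr_le0 => z _; set s := side_mass x z.
have s_le0 : s * (\sum_a x a - s) <= 0.
  have [s_le0|s_gt0] := lerP s 0.
    by apply: mulr_le0_ge0; rewrite // subr_ge0 (le_trans s_le0).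
  by apply: mulr_ge0_le0; [exact: ltW | rewrite subr_le0 (le_trans x_le1) ?gtz0_ge1].
suff -> : s * \sum_a x a + (\sum_a x a) * s - s * s *+ 2 = (s * (\sum_a x a - s)) *+ 2.
  by rewrite pmulrn_lle0.
ring.
Qed.

Lemma halved_hamming_upper_le0 (R : numDomainType) (x : 'I_N -> int) :
  0 <= \sum_a x a <= 1 ->
  \sum_(a < N) \sum_(b < N | (a < b)%N) (x a * x b)%:~R * ((m a b)%:R : R) <= 0.
Proof.
move=> x01; suff -> : \sum_(a < N) \sum_(b < N | (a < b)%N) (x a * x b)%:~R * ((m a b)%:R : R) =
    (\sum_(a < N) \sum_(b < N | (a < b)%N) x a * x b * (m a b)%:R)%:~R.
  rewrite lerz0 -(pmulrn_lle0 _ (ltn0Sn 1)) -sum_sym_upper ?halved_hamming_form_int_le0 //.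
    by move=> a b; rewrite halved_hamming_sym [x a * _]mulrC.
  by move=> a; rewrite halved_hamming_diag mulr0.
rewrite rmorph_sum; apply: eq_bigr => a _; rewrite rmorph_sum; apply: eq_bigr => b _.
by rewrite intrM !rmorphM rmorph_nat.
Qed.

Lemma hypermetric_halved_hamming (R : numDomainType) :
  hypermetric (\matrix_(a, b) (m a b)%:R : 'M[R]_N).
Proof.
move=> x x1; under eq_bigr do under eq_bigr do rewrite mxE.
by apply: halved_hamming_upper_le0; rewrite x1.
Qed.

Lemma negative_type_halved_hamming (R : numDomainType) :
  negative_type (\matrix_(a, b) (m a b)%:R : 'M[R]_N).
Proof.
move=> x x0; under eq_bigr do under eq_bigr do rewrite mxE.
by apply: halved_hamming_upper_le0; rewrite x0.
Qed.

Lemma halved_hamming_form_conj_le0 (C : numClosedFieldType) (w : 'I_N -> C) :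
  \sum_a w a = 0 -> \sum_a \sum_b w a * (w b)^* * (m a b)%:R <= 0.
Proof.
move=> w0; rewrite -(pmulrn_lle0 _ (ltn0Sn 1)) halved_hamming_form -rmorph_sum w0 rmorph0.
apply: sumr_le0 => z _; rewrite mulr0 mul0r add0r sub0r oppr_le0 pmulrn_lge0 //.
have -> : side_mass (fun b => (w b)^*) z = (side_mass w z)^*.
  by rewrite rmorph_sum; apply: eq_bigr => a _; rewrite rmorphM /= conjC_nat.
exact: mul_conjC_ge0.
Qed.

Lemma one_positive_eigenvalue_halved_hamming (R : rcfType) :
  (exists a b, 0 < m a b)%N -> one_positive_eigenvalue (\matrix_(a, b) (m a b)%:R : 'M[R]_N).
Proof.
move=> [a0 [b0 m_gt0]]; apply: one_positive_eigenvalue_complexified.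
- by apply/matrixP => a b; rewrite !mxE halved_hamming_sym.
- move=> y y0; rewrite form_mxE; under eq_bigr do under eq_bigr do rewrite !mxE rmorph_nat.
  exact: halved_hamming_form_conj_le0.
exists (const_mx 1); rewrite form_mxE.
under eq_bigr do under eq_bigr do rewrite !mxE conjC1 !mul1r rmorph_nat.
under eq_bigr do rewrite -natr_sum; rewrite -natr_sum ltr0n.
by rewrite (bigD1 a0) //= (bigD1 b0) //= -addnA (leq_trans m_gt0) ?leq_addr.
Qed.

End HalvedHamming.

Theorem corollary4p3 (R : rcfType) (V : finType) (e : rel V) :
  (3 <= #|V|)%N -> is_tree e ->
  hypermetric (Min4PC R e) /\ negative_type (Min4PC R e) /\
  one_positive_eigenvalue (Min4PC R e).
Proof.
move=> V3 [e_sym e_irr e_conn e_acyc].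
have card_V2 (a : 'I_#|V2 V|) : #|enum_val a| = 2 by have := enum_valP a; rewrite inE => /eqP.
have m_hamming a b := min4pc_entry_count e_sym e_irr e_conn e_acyc (card_V2 a) (card_V2 b).
split; first exact: (hypermetric_halved_hamming m_hamming R).
split; first exact: (negative_type_halved_hamming m_hamming R).
exact/(one_positive_eigenvalue_halved_hamming m_hamming)/min4pc_entry_gt0.
Qed.
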